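(* For every $k$-tree $T$ and every $k$-clique $C$ of $T$, $R(T;C)>\overline N(T;C)$.
   Context: A $k$-tree is defined recursively: $K_k$ is a $k$-tree, and if $T$ is a $k$-tree then so is the graph obtained by joining a new vertex to all vertices of some $k$-clique of $T$; there are no others. A sub-$k$-tree is a subgraph that is itself a $k$-tree. $R(T;C)$ is the sum of the numbers of vertices of all sub-$k$-trees of $T$ containing $C$, and $\overline N(T;C)$ is the number of sub-$k$-trees of $T$ not containing $C$. *)

From mathcomp Require Import all_boot.
From mathcomp Require Import boolp.
Set Implicit Arguments. Unset Strict Implicit. Unset Printing Implicit Defensive.

Section KTree.
Variable V : finType.

(* A graph on the vertex type V is a pair (S, E) : vertex set S and a set E of
   edges, each edge being a 2-element subset of S. *)

Definition is_clique (E : {set {set V}}) (K : {set V}) : Prop :=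
  forall x y, x \in K -> y \in K -> x != y -> [set x; y] \in E.

Definition complete_edges (S : {set V}) : {set {set V}} :=
  [set e in powerset S | #|e| == 2].

Inductive is_ktree (k : nat) : {set V} -> {set {set V}} -> Prop :=
| ktree_base (S : {set V}) : #|S| = k -> is_ktree k S (complete_edges S)
| ktree_add (S : {set V}) (E : {set {set V}}) (K : {set V}) (v : V) :
    is_ktree k S E -> K \subset S -> #|K| = k -> is_clique E K -> v \notin S ->
    is_ktree k (v |: S) (E :|: [set [set v; w] | w in K]).

Definition subktrees (k : nat) (VT : {set V}) (ET : {set {set V}}) :
  {set {set V} * {set {set V}}} :=
  [set p : {set V} * {set {set V}} | [&& p.1 \subset VT, p.2 \subset ET & `[< is_ktree k p.1 p.2 >] ]].

Definition contains_clique (p : {set V} * {set {set V}}) (C : {set V}) : bool :=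
  (C \subset p.1) && (complete_edges C \subset p.2).

Definition Rsum (k : nat) (VT : {set V}) (ET : {set {set V}}) (C : {set V}) : nat :=
  \sum_(p in subktrees k VT ET | contains_clique p C) #|p.1|.

Definition Nbar (k : nat) (VT : {set V}) (ET : {set {set V}}) (C : {set V}) : nat :=
  #|[set p in subktrees k VT ET | ~~ contains_clique p C]|.

End KTree.

(* Induction along the construction of T: let T = T0 + v, with v joined to a
   k-clique K of T0.  The sub-k-trees of T are those of T0, the at most k cliques
   spanned by v and k-1 vertices of K, and the extensions q + v of the sub-k-trees q
   of T0 containing K; q + v has one more vertex than q and contains C whenever q
   does, and always when v is in C.
   The inequality itself does not survive this induction, so it is strengthened to
   every family F of sub-k-trees closed upwards under inclusion:
   #|F| <= sum of |p| over the p in F containing C, and even #|F| + k - 1 <= that sum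
   when F contains C itself or consists of all sub-k-trees containing a fixed k-clique.
   The members of F avoiding v, the q with q + v in F, and the union of the two are
   again upward closed, and the k - 1 bonus is what pays for the cliques through v.
   The theorem is the case F = all sub-k-trees, since C is a sub-k-tree containing C. *)

From mathcomp Require Import all_boot.
From mathcomp Require Import boolp zify.
Set Implicit Arguments. Unset Strict Implicit. Unset Printing Implicit Defensive.

Section Graphs.
Variable V : finType.
Implicit Types (S K X : {set V}) (E : {set {set V}}) (e : {set V}) (u v w x : V).

Definition nbr E v : {set V} := [set x | (x != v) && ([set v; x] \in E)].
Definition del E v : {set {set V}} := [set e in E | v \notin e].
Definition star v K : {set {set V}} := [set [set v; w] | w in K].

Lemma in_complete_edges S e : (e \in complete_edges S) = (e \subset S) && (#|e| == 2).
Proof. by rewrite inE powersetE. Qed.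

Lemma complete_edgesS X S : X \subset S -> complete_edges X \subset complete_edges S.
Proof.
move=> XS; apply/subsetP => e; rewrite !in_complete_edges => /andP [eX ->].
by rewrite (subset_trans eX XS).
Qed.

Lemma set2_sub x y S : ([set x; y] \subset S) = (x \in S) && (y \in S).
Proof. by rewrite subUset !sub1set. Qed.

Lemma subsetU1_notin x (A B : {set V}) : x \notin A -> (A \subset x |: B) = (A \subset B).
Proof.
move=> xA; apply/idP/idP => [AB|/subset_trans->//]; last exact: subsetUr.
apply/subsetP => y yA; move: (subsetP AB y yA); rewrite in_setU1 => /predU1P [yx|//].
by rewrite -yx yA in xA.
Qed.

Lemma card2_set2 v e : #|e| == 2 -> v \in e -> exists2 x, x != v & e = [set v; x].
Proof.
move=> /cards2P [x [y [xy ->]]]; rewrite !inE => /orP [] /eqP ->.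
  by exists y; rewrite // eq_sym.
by exists x; rewrite // setUC.
Qed.

Lemma set2_eqr u x w : [set u; x] = [set u; w] -> x != u -> x = w.
Proof.
move=> e xu; have : x \in [set u; w] by rewrite -e !inE eqxx orbT.
by rewrite !inE (negbTE xu) => /eqP.
Qed.

Lemma star_center v K e : e \in star v K -> v \in e.
Proof. by case/imsetP => w _ ->; rewrite !inE eqxx. Qed.

Lemma cliqueP E X : reflect (is_clique E X) (complete_edges X \subset E).
Proof.
apply: (iffP subsetP) => [sub x y xX yX xy | cl e].
  by apply: sub; rewrite in_complete_edges set2_sub xX yX cards2 xy.
rewrite in_complete_edges => /andP [eX /cards2P [x [y [xy exy]]]].
by move: eX; rewrite exy set2_sub => /andP [xX yX]; apply: cl.
Qed.

Lemma cliqueS E1 E2 X : E1 \subset E2 -> is_clique E1 X -> is_clique E2 X.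
Proof. by move=> sE /cliqueP sX; apply/cliqueP; apply: subset_trans sE. Qed.

Lemma clique_complete_edges S X : X \subset S -> is_clique (complete_edges S) X.
Proof. by move=> XS; apply/cliqueP; apply: complete_edgesS. Qed.

Lemma complete_edgesU1 u S :
  u \notin S -> complete_edges S :|: star u S = complete_edges (u |: S).
Proof.
move=> uS; apply/setP => e; rewrite inE !in_complete_edges; apply/idP/idP.
  case/orP => [/andP [eS ->]|/imsetP [w wS ->]].
    by rewrite (subset_trans eS) // subsetUr.
  rewrite set2_sub !inE eqxx wS orbT cards2 /= eqSS eqb1.
  by apply: contraNneq uS => ->.
case/andP => eS e2; case: (boolP (u \in e)) => ue.
  have [x xu ex] := card2_set2 e2 ue; apply/orP; right; apply/imsetP; exists x => //.
  by move: eS; rewrite ex set2_sub !inE (negbTE xu) => /andP [_].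
apply/orP; left; rewrite e2 andbT; apply/subsetP => x xe.
by move: (subsetP eS x xe); rewrite !inE => /predU1P [xu|//]; rewrite -xu xe in ue.
Qed.

Lemma del_complete_edges X v : del (complete_edges X) v = complete_edges (X :\ v).
Proof. by apply/setP => e; rewrite !inE subsetD1 andbAC. Qed.

Lemma nbr_complete_edges X v : v \in X -> nbr (complete_edges X) v = X :\ v.
Proof.
move=> vX; apply/setP => x; rewrite in_setD1 inE in_complete_edges set2_sub vX cards2.
by case: (eqVneq x v) => //= _; rewrite andbT.
Qed.

Lemma nbr_edges S E v : E \subset complete_edges S -> nbr E v \subset S :\ v.
Proof.
move=> ES; apply/subsetP => x; rewrite !inE => /andP [xv /(subsetP ES)].
by rewrite in_complete_edges set2_sub xv => /andP [/andP [_ ->]].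
Qed.

Lemma edges_split S E v : E \subset complete_edges S -> E = del E v :|: star v (nbr E v).
Proof.
move=> ES; apply/setP => e; rewrite !inE.
case: (boolP (v \in e)) => ve /=; rewrite ?andbT ?andbF /=.
  apply/idP/imsetP => [eE|[x]]; last by rewrite inE => /andP [_ xE] ->.
  move: (subsetP ES e eE); rewrite in_complete_edges => /andP [_ e2].
  by have [x xv ex] := card2_set2 e2 ve; exists x; rewrite // inE xv -ex eE.
by case: (boolP (e \in star v (nbr E v))) => [/star_center|]; rewrite ?(negbTE ve) ?orbF.
Qed.

Lemma del_starU1 S E K u :
  E \subset complete_edges S -> u \notin S -> del (E :|: star u K) u = E.
Proof.
move=> ES uS; apply/setP => e.
have uE : e \in E -> u \notin e.
  move/(subsetP ES); rewrite in_complete_edges => /andP [/subsetP eS _].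
  by apply: contra uS => /eS.
rewrite !inE; case: (boolP (u \in e)) => ue /=; rewrite ?andbF ?andbT.
  by case eE: (e \in E); rewrite // (negbTE (uE eE)) in ue.
by case: (boolP (e \in star u K)) => [/star_center|]; rewrite ?(negbTE ue) ?orbF.
Qed.

Lemma nbr_starU1 S E K u :
  E \subset complete_edges S -> K \subset S -> u \notin S -> nbr (E :|: star u K) u = K.
Proof.
move=> ES KS uS; apply/setP => x; rewrite !inE; apply/idP/idP.
  case/andP => xu /orP [/(subsetP ES)|/imsetP [w wK /set2_eqr ->//]].
  by rewrite in_complete_edges set2_sub (negbTE uS).
move=> xK; have xu : x != u by apply: contraNneq uS => <-; apply: (subsetP KS).
by rewrite xu; apply/orP; right; apply/imsetP; exists x.
Qed.

Lemma nbr_starU v u K E : v != u -> v \notin K -> nbr (E :|: star u K) v = nbr E v.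
Proof.
move=> vu vK; apply/setP => x; rewrite !inE; case: (x != v) => //=.
case: (boolP (_ \in star u K)) => [/imsetP [w wK e]|]; rewrite ?orbF //.
have : v \in [set u; w] by rewrite -e !inE eqxx.
by rewrite !inE (negbTE vu) => /eqP vw; rewrite vw wK in vK.
Qed.

Lemma del_starU v u K E : v != u -> v \notin K -> del (E :|: star u K) v = del E v :|: star u K.
Proof.
move=> vu vK; apply/setP => e; rewrite !inE andb_orl; congr (_ || _).
case: (boolP (e \in star u K)) => [/imsetP [w wK ->]|]; rewrite ?andbF //=.
rewrite !inE negb_or vu /=.
by apply: contraNneq vK => ->.
Qed.

Lemma nbr_starU_mem v u K E : u != v -> v \in K -> u |: nbr E v \subset nbr (E :|: star u K) v.
Proof.
move=> uv vK; apply/subsetP => x; rewrite !inE => /predU1P [->|/andP [-> ->//]].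
by rewrite uv; apply/orP; right; apply/imsetP; exists v; rewrite // setUC.
Qed.

Variable k : nat.

Lemma ktree_edges S E : is_ktree k S E -> E \subset complete_edges S.
Proof.
elim=> // S0 E0 K v _ E0S KS _ _ vS; rewrite -complete_edgesU1 //.
by apply: setUSS => //; apply: imsetS.
Qed.

Lemma ktree_card S E : is_ktree k S E -> k <= #|S|.
Proof. by elim=> [S0 -> //| S0 E0 K v _ IH _ _ _ vS]; rewrite cardsU1 vS ltnW. Qed.

Lemma ktree_complete S E : is_ktree k S E -> #|S| = k -> E = complete_edges S.
Proof.
case=> // S0 E0 K v H0 _ _ _ vS; rewrite cardsU1 vS => cS.
by have := ktree_card H0; rewrite -cS ltnn.
Qed.

Lemma complete_remove S v : #|S| = k.+1 -> v \in S ->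
  [/\ is_ktree k (S :\ v) (del (complete_edges S) v), #|nbr (complete_edges S) v| = k
     & is_clique (complete_edges S) (nbr (complete_edges S) v)].
Proof.
move=> cS vS; have cSv : #|S :\ v| = k by move: (cardsD1 v S); rewrite vS cS => -[].
rewrite del_complete_edges nbr_complete_edges //; split=> //; first exact: ktree_base.
exact/clique_complete_edges/subD1set.
Qed.

Lemma ktree_remove S E v : is_ktree k S E -> v \in S -> k < #|S| -> #|nbr E v| <= k ->
  [/\ is_ktree k (S :\ v) (del E v), #|nbr E v| = k & is_clique E (nbr E v)].
Proof.
move=> H; elim: H v => [S0 -> | S1 E1 K u H1 IH KS cK clK uS] v; first by rewrite ltnn.
have E1S := ktree_edges H1.
rewrite in_setU1 => /predU1P [-> _ _ | vS1 lt deg].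
  rewrite setU1K // (del_starU1 _ E1S) // (nbr_starU1 E1S) //.
  by split=> //; apply: cliqueS clK; apply: subsetUl.
have uv : u != v by apply: contraNneq uS => ->.
have [ltS1 | leS1] := ltnP k #|S1|; last first.
  have cS1 : #|S1| = k by apply/eqP; rewrite eqn_leq leS1 (ktree_card H1).
  have KS1 : K = S1 by apply/eqP; rewrite eqEcard KS cK cS1 leqnn.
  rewrite (ktree_complete H1 cS1) KS1 complete_edgesU1 //.
  by apply: complete_remove; rewrite ?cardsU1 ?uS ?cS1 // in_setU1 vS1 orbT.
have deg1 : #|nbr E1 v| <= k.
  apply: leq_trans deg; apply/subset_leq_card/subsetP => x.
  by rewrite !inE => /andP [-> ->].
have [H1' d1 cl1] := IH v vS1 ltS1 deg1.
have vK : v \notin K.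
  apply: contraTN deg => vK; rewrite -ltnNge -d1.
  have uN : u \notin nbr E1 v by apply: contra uS => /(subsetP (nbr_edges v E1S)) /setD1P [].
  apply: (@leq_trans #|u |: nbr E1 v|); first by rewrite cardsU1 uN.
  exact/subset_leq_card/nbr_starU_mem.
have -> : (u |: S1) :\ v = u |: (S1 :\ v).
  by apply/setP => x; rewrite !inE; case: (eqVneq x v) => // ->; rewrite eq_sym (negbTE uv).
rewrite nbr_starU 1?eq_sym // del_starU 1?eq_sym //; split=> //.
  apply: ktree_add => //; first by rewrite subsetD1 KS.
    move=> x y xK yK xy; rewrite !inE clK // negb_or /=.
    by apply/andP; split; apply: contraNneq vK => ->.
  by rewrite !inE negb_and uS orbT.
by apply: cliqueS cl1; apply: subsetUl.
Qed.

End Graphs.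

Section SubKTrees.
Variables (V : finType) (k : nat).
Local Notation graph := ({set V} * {set {set V}})%type.
Implicit Types (S K C : {set V}) (E : {set {set V}}) (p q : graph) (U F : {set graph}).

Definition subgraph p q := (p.1 \subset q.1) && (p.2 \subset q.2).
Definition clique_graph K : graph := (K, complete_edges K).
Definition kclique S E K := [/\ K \subset S, #|K| = k & is_clique E K].
Definition containing U K := [set p in U | contains_clique p K].
Definition is_upset U F := F \subset U /\ {in F & U, forall p q, subgraph p q -> q \in F}.
Definition weight C p := if contains_clique p C then #|p.1| else 0.
Definition bonus S E C F :=
  clique_graph C \in F \/ exists2 K, kclique S E K & F = containing (subktrees k S E) K.
Definition weight_bound S E := forall C F, kclique S E C -> is_upset (subktrees k S E) F ->
  #|F| <= \sum_(p in F) weight C p /\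
  (bonus S E C F -> #|F| + k.-1 <= \sum_(p in F) weight C p).

Lemma subgraph_trans p q r : subgraph p q -> subgraph q r -> subgraph p r.
Proof.
move=> /andP [pq1 pq2] /andP [qr1 qr2].
by rewrite /subgraph (subset_trans pq1 qr1) (subset_trans pq2 qr2).
Qed.

Lemma upsetU U F1 F2 : is_upset U F1 -> is_upset U F2 -> is_upset U (F1 :|: F2).
Proof.
case=> F1U up1 [F2U up2]; split; first by rewrite subUset F1U.
move=> p q /setUP [pF|pF] qU pq; rewrite inE; [by rewrite (up1 p q) | by rewrite (up2 p q) ?orbT].
Qed.

Lemma subktreesP p S E :
  reflect [/\ p.1 \subset S, p.2 \subset E & is_ktree k p.1 p.2] (p \in subktrees k S E).
Proof.
rewrite inE; apply: (iffP and3P) => [[-> -> /asboolP //] | [-> -> H]].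
by split=> //; apply/asboolP.
Qed.

Lemma ktree_subktree S E : is_ktree k S E -> (S, E) \in subktrees k S E.
Proof. by move=> H; apply/subktreesP. Qed.

Lemma kclique_subktree S E K : kclique S E K -> clique_graph K \in subktrees k S E.
Proof. by case=> KS cK /cliqueP KE; apply/subktreesP; split=> //; apply: ktree_base. Qed.

Lemma kclique_contained S E K : kclique S E K -> contains_clique (S, E) K.
Proof. by case=> KS _ /cliqueP KE; apply/andP. Qed.

Lemma subktree_clique p S E : p \in subktrees k S E -> #|p.1| = k -> p = clique_graph p.1.
Proof. by case: p => X EX /subktreesP [_ _ /= H] /= cX; rewrite /clique_graph (ktree_complete H cX). Qed.

Lemma contains_clique_card p K : #|p.1| <= #|K| -> contains_clique p K -> p.1 = K.
Proof. by move=> cp /andP [Kp _]; apply/esym/eqP; rewrite eqEcard Kp. Qed.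

Lemma subktrees_complete S : #|S| = k -> subktrees k S (complete_edges S) = [set clique_graph S].
Proof.
move=> cS; apply/setP => p; rewrite in_set1; apply/idP/eqP => [pU|->].
  case/subktreesP: (pU) => pS _ H.
  have eS : p.1 = S by apply/eqP; rewrite eqEcard pS cS (ktree_card H).
  by rewrite (subktree_clique pU) eS // cS.
by apply: kclique_subktree; split=> //; apply: clique_complete_edges.
Qed.

Lemma weight_bound_base S : 0 < k -> #|S| = k -> weight_bound S (complete_edges S).
Proof.
move=> k_gt0 cS C F kC [FU _]; have [CS cC _] := kC.
have eC : C = S by apply/eqP; rewrite eqEcard CS cS cC leqnn.
move: FU; rewrite subktrees_complete // subset1 => /orP [] /eqP ->.
  by rewrite big_set1 cards1 /weight eC /contains_clique !subxx cS /=; split=> // _; lia.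
rewrite cards0; split=> // [[|[K kK eF]]]; first by rewrite inE.
have : (S, complete_edges S) \in containing (subktrees k S (complete_edges S)) K.
  by rewrite inE ktree_subktree ?kclique_contained //; apply: ktree_base.
by rewrite -eF inE.
Qed.

End SubKTrees.

Section Extension.
Variables (V : finType) (k : nat).
Local Notation graph := ({set V} * {set {set V}})%type.
Variables (S0 K : {set V}) (E0 : {set {set V}}) (v : V).
Hypotheses (k_gt0 : 0 < k) (ktreeT0 : is_ktree k S0 E0) (KS0 : K \subset S0)
  (cardK : #|K| = k) (cliqueK : is_clique E0 K) (vS0 : v \notin S0).

Local Notation S := (v |: S0).
Local Notation E := (E0 :|: star v K).
Local Notation U := (subktrees k S E).
Local Notation U0 := (subktrees k S0 E0).
Implicit Types (C X : {set V}) (p q : graph) (F : {set graph}).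

Definition ext q : graph := (v |: q.1, q.2 :|: star v K).
Definition shrink p : graph := (p.1 :\ v, del p.2 v).

Lemma v_notin_K : v \notin K.
Proof. exact: contra (subsetP KS0 v) vS0. Qed.

Lemma E0_avoid e : e \in E0 -> v \notin e.
Proof.
move/(subsetP (ktree_edges ktreeT0)); rewrite in_complete_edges => /andP [/subsetP eS0 _].
exact: contra (eS0 v) vS0.
Qed.

Lemma kcliqueK : kclique k S0 E0 K.
Proof. by []. Qed.

Lemma subktrees0_avoid p : p \in U0 -> v \notin p.1.
Proof. by case/subktreesP => pS0 _ _; apply: contra (subsetP pS0 v) vS0. Qed.

Lemma subktrees0_sub : U0 \subset U.
Proof.
apply/subsetP => p /subktreesP [pS0 pE0 H]; apply/subktreesP.
by split=> //; [apply: subset_trans pS0 _; apply: subsetUr | apply: subset_trans pE0 _; apply: subsetUl].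
Qed.

Lemma subktrees_avoid p : p \in U -> v \notin p.1 -> p \in U0.
Proof.
case/subktreesP => pS pE H vp; apply/subktreesP; split => //; first by rewrite -(subsetU1_notin _ vp).
apply/subsetP => e ep; move: (subsetP pE e ep); rewrite inE => /orP [//|/star_center ve].
move: (subsetP (ktree_edges H) e ep); rewrite in_complete_edges => /andP [/subsetP ep1 _].
by rewrite ep1 in vp.
Qed.

Lemma nbr_subktree p : p \in U -> nbr p.2 v \subset K.
Proof.
case/subktreesP => _ pE _; apply/subsetP => x; rewrite inE => /andP [xv /(subsetP pE)].
rewrite inE => /orP [/E0_avoid|/imsetP [w wK /set2_eqr -> //]].
by rewrite !inE eqxx.
Qed.

Lemma ext_subktree q : q \in containing U0 K -> ext q \in U.
Proof.
case/setIdP => /subktreesP [qS0 qE0 H] /andP [Kq /cliqueP cq].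
apply/subktreesP; split=> /=; [exact: setUS | exact: setSU |].
by apply: ktree_add => //; apply: contra (subsetP qS0 v) vS0.
Qed.

Lemma extK : {in U0, cancel ext shrink}.
Proof.
move=> q qU0; have vq := subktrees0_avoid qU0; case/subktreesP: qU0 => _ _ H.
by rewrite /shrink /= setU1K // (del_starU1 _ (ktree_edges H)) //; case: q {vq H}.
Qed.

Lemma subktree_ext p : p \in U -> v \in p.1 -> k < #|p.1| ->
  shrink p \in containing U0 K /\ p = ext (shrink p).
Proof.
move=> pU vp lt; have nK := nbr_subktree pU; case/subktreesP: (pU) => pS pE H.
have [H' cn cl] := ktree_remove H vp lt (leq_trans (subset_leq_card nK) (eq_leq cardK)).
have eN : nbr p.2 v = K by apply/eqP; rewrite eqEcard nK cn cardK leqnn.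
rewrite eN in cl; split; last first.
  rewrite /ext /shrink /= setD1K // -eN -(edges_split v (ktree_edges H)).
  exact: surjective_pairing.
apply/setIdP; split.
  apply/subktreesP; split=> //=; first by rewrite subDset.
  apply/subsetP => e; rewrite inE => /andP [ep ve].
  by move: (subsetP pE e ep); rewrite inE => /orP [//|/star_center]; rewrite (negbTE ve).
apply/andP; split=> /=; first by rewrite -eN (nbr_edges _ (ktree_edges H)).
apply/subsetP => e eK; rewrite inE (subsetP (introT (cliqueP _ _) cl) e eK) /=.
by move: eK; rewrite in_complete_edges => /andP [/subsetP eK _]; apply: contra (eK v) v_notin_K.
Qed.

Lemma subgraph_ext q q' : subgraph q q' -> subgraph (ext q) (ext q').
Proof. by case/andP => s1 s2; rewrite /subgraph /= setUS ?setSU. Qed.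

Lemma subgraph_ext_self q : subgraph q (ext q).
Proof. by rewrite /subgraph /= subsetUr subsetUl. Qed.

Lemma card_ext q : q \in U0 -> #|(ext q).1| = #|q.1|.+1.
Proof. by move=> qU0; rewrite /= cardsU1 subktrees0_avoid. Qed.

Lemma subktree_small p : p \in U -> v \in p.1 -> #|p.1| = k -> p.1 \subset v |: K.
Proof.
move=> pU vp cp; have nK := nbr_subktree pU; have pK := subktree_clique pU cp.
apply/subsetP => x xp; rewrite in_setU1; case: (eqVneq x v) => //= xv.
by apply: (subsetP nK); rewrite pK /= nbr_complete_edges // !inE xv.
Qed.

Lemma contains_ext_through X q : X \subset v |: K -> contains_clique q K -> contains_clique (ext q) X.
Proof.
move=> XK /andP [Kq cKq]; apply/andP; split=> /=; first by apply: subset_trans XK (setUS _ Kq).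
apply: subset_trans (complete_edgesS XK) _; rewrite -complete_edgesU1 ?v_notin_K //.
exact: setSU.
Qed.

Lemma contains_ext C q : v \notin C -> contains_clique (ext q) C = contains_clique q C.
Proof.
move=> vC; rewrite /contains_clique /= subsetU1_notin //; congr (_ && _).
apply/idP/idP => [sub|/subset_trans->//]; last exact: subsetUl.
apply/subsetP => e eC; case/setUP: (subsetP sub e eC) => // /star_center ve.
by move: eC; rewrite in_complete_edges => /andP [/subsetP eC _]; move: (eC v ve); rewrite (negbTE vC).
Qed.

Lemma kclique_through C : kclique k S E C -> v \in C -> C \subset v |: K.
Proof.
case=> _ _ cl vC; apply/subsetP => x xC; rewrite in_setU1; case: (eqVneq x v) => //= xv.
have vx : v != x by rewrite eq_sym.
move: (cl v x vC xC vx); rewrite inE => /orP [/E0_avoid|/imsetP [w wK /set2_eqr -> //]].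
by rewrite !inE eqxx.
Qed.

Lemma kclique_avoid C : kclique k S E C -> v \notin C -> kclique k S0 E0 C.
Proof.
case=> CS cC cl vC; split=> //; first by rewrite -(subsetU1_notin _ vC).
move=> x y xC yC xy; move: (cl x y xC yC xy); rewrite inE => /orP [//|/star_center].
by rewrite !inE => /orP [] /eqP vxy; rewrite vxy ?xC ?yC in vC.
Qed.

Definition avoiders F := [set p in F | v \notin p.1].
Definition vcliques F := [set p in F | (v \in p.1) && (#|p.1| == k)].
Definition ext_preim F := [set q in containing U0 K | ext q \in F].

Lemma big_ext_split F g : F \subset U -> \sum_(p in F) g p =
  \sum_(p in avoiders F) g p + \sum_(p in vcliques F) g p + \sum_(q in ext_preim F) g (ext q).
Proof.
move=> FU; rewrite (bigID (fun p : graph => v \notin p.1)) /= -addnA; congr (_ + _).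
  by apply: eq_bigl => p; rewrite inE.
rewrite (bigID (fun p : graph => #|p.1| == k)) /=; congr (_ + _).
  by apply: eq_bigl => p; rewrite !inE negbK andbA.
have ext_inj : {in ext_preim F &, injective ext}.
  move=> q1 q2 /setIdP [/setIdP [q1U0 _] _] /setIdP [/setIdP [q2U0 _] _] e.
  by rewrite -(extK q1U0) -(extK q2U0) e.
rewrite -(big_imset _ ext_inj); apply: eq_bigl => p; apply/idP/imsetP.
  case/andP => /andP [pF]; rewrite negbK => vp nk.
  have pU := subsetP FU p pF; case/subktreesP: (pU) => _ _ H.
  have lt : k < #|p.1| by rewrite ltn_neqAle eq_sym nk (ktree_card H).
  have [qK ep] := subktree_ext pU vp lt.
  by exists (shrink p) => //; rewrite inE qK -ep pF.
case=> q /setIdP [/setIdP [qU0 _] qF] ->; rewrite qF /= in_setU1 eqxx /= card_ext //.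
by case/subktreesP: qU0 => _ _ /ktree_card kq; rewrite gtn_eqF.
Qed.

Lemma card_ext_split F : F \subset U ->
  #|F| = #|avoiders F| + #|vcliques F| + #|ext_preim F|.
Proof. by move=> FU; rewrite -!sum1_card (big_ext_split _ FU). Qed.

Lemma upset_avoiders F : is_upset U F -> is_upset U0 (avoiders F).
Proof.
case=> FU uF; split.
  by apply/subsetP => p /setIdP [pF vp]; apply: subktrees_avoid (subsetP FU p pF) vp.
move=> p q /setIdP [pF _] qU0 pq.
by rewrite inE (uF p q) ?subktrees0_avoid ?(subsetP subktrees0_sub).
Qed.

Lemma upset_ext_preim F : is_upset U F -> is_upset U0 (ext_preim F).
Proof.
case=> FU uF; split; first by apply/subsetP => q /setIdP [/setIdP []].
move=> q q' /setIdP [/setIdP [_ Kq] qF] q'U0 qq'.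
have q'K : q' \in containing U0 K.
  by rewrite inE q'U0; exact: (subgraph_trans (p := clique_graph K) Kq qq').
by rewrite inE q'K (uF _ _ qF (ext_subktree q'K)) ?subgraph_ext.
Qed.

Lemma ext_preim_full F : is_upset U F -> 0 < #|vcliques F| -> ext_preim F = containing U0 K.
Proof.
case=> FU uF /card_gt0P [p /setIdP [pF /andP [vp /eqP cp]]].
have pU := subsetP FU p pF.
apply/setP => q; rewrite inE; apply: andb_idr => qK.
apply: (uF p) => //; first exact: ext_subktree.
rewrite (subktree_clique pU cp); apply: contains_ext_through (subktree_small pU vp cp) _.
by case/setIdP: qK.
Qed.

Lemma card_vcliques F : F \subset U -> #|vcliques F| <= k.
Proof.
move=> FU; have inj : {in vcliques F &, injective (fun p : graph => p.1 :\ v)}.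
  move=> p1 p2 /setIdP [/(subsetP FU) u1 /andP [v1 /eqP c1]].
  move=> /setIdP [/(subsetP FU) u2 /andP [v2 /eqP c2]] e.
  by rewrite (subktree_clique u1 c1) (subktree_clique u2 c2) -(setD1K v1) e setD1K.
rewrite -(card_in_imset inj).
apply: (@leq_trans #|[set X : {set V} | X \subset K & #|X| == k.-1]|); last first.
  by rewrite cards_draws cardK; case: k k_gt0 => // n _; rewrite binSn.
apply/subset_leq_card/subsetP => _ /imsetP [p /setIdP [/(subsetP FU) pU /andP [vp /eqP cp]] ->].
rewrite inE subDset (subktree_small pU vp cp) /=.
by have := cardsD1 v p.1; rewrite vp cp add1n => ->.
Qed.

Lemma avoiders_containing K1 : avoiders (containing U K1) = containing U0 K1.
Proof.
apply/setP => p; apply/setIdP/setIdP => [[/setIdP [pU pK1] vp] | [pU0 pK1]].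
  by split=> //; apply: subktrees_avoid.
by split; [apply/setIdP; split=> //; apply: (subsetP subktrees0_sub) | apply: subktrees0_avoid].
Qed.

Lemma vcliques_containing K1 : kclique k S E K1 ->
  vcliques (containing U K1) = if v \in K1 then [set clique_graph K1] else set0.
Proof.
move=> kK1; have [_ cK1 _] := kK1.
have sub : vcliques (containing U K1) \subset [set clique_graph K1].
  apply/subsetP => p /setIdP [/setIdP [pU pK1] /andP [_ /eqP cp]].
  by rewrite in_set1 (subktree_clique pU cp) (contains_clique_card _ pK1) ?cp ?cK1.
apply/eqP; case: ifP => vK1.
  rewrite eqEsubset sub sub1set; apply/setIdP; split; last by rewrite /= vK1 cK1 eqxx.
  by rewrite inE kclique_subktree //= /contains_clique !subxx.
rewrite -subset0; apply/subsetP => p pQ; move: (subsetP sub p pQ); rewrite in_set1 => /eqP ep.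
by move: pQ; rewrite ep => /setIdP [_ /andP [/= vK1' _]]; rewrite vK1' in vK1.
Qed.

Lemma vcliques_clique C F : kclique k S E C -> v \in C -> clique_graph C \in F ->
  0 < #|vcliques F| /\ k <= \sum_(p in vcliques F) weight C p.
Proof.
case=> _ cC _ vC CF; have CQ : clique_graph C \in vcliques F by rewrite inE CF /= vC cC eqxx.
split; first by apply/card_gt0P; exists (clique_graph C).
by rewrite (bigD1 _ CQ) /= /weight /contains_clique !subxx /= cC leq_addr.
Qed.

Lemma card_vcliques_noclique C F : kclique k S E C -> v \in C -> F \subset U ->
  clique_graph C \notin F -> #|vcliques F| < k.
Proof.
move=> kC vC FU CF; have [_ cC _] := kC.
have CU : clique_graph C \in U := kclique_subktree kC.
apply: leq_trans (card_vcliques (F := clique_graph C |: F) _); last by rewrite subUset sub1set CU.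
apply/proper_card/properP; split.
  by apply/subsetP => p /setIdP [pF h]; rewrite inE in_setU1 pF orbT.
by exists (clique_graph C); rewrite !inE ?eqxx ?(negbTE CF) //= vC cC eqxx.
Qed.

Lemma weight_vcliques_avoid C F : kclique k S E C -> v \notin C ->
  \sum_(p in vcliques F) weight C p = 0.
Proof.
case=> _ cC _ vC; apply: big1 => p /setIdP [_ /andP [vp /eqP cp]]; rewrite /weight.
case: ifP => // pC; have ep : p.1 = C by apply: contains_clique_card pC; rewrite cp cC.
by rewrite ep (negbTE vC) in vp.
Qed.

Lemma weight_ext_through C q : kclique k S E C -> v \in C -> q \in containing U0 K ->
  weight C (ext q) = #|q.1|.+1.
Proof.
move=> kC vC /setIdP [qU0 Kq].
by rewrite /weight contains_ext_through ?card_ext ?(kclique_through kC).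
Qed.

Lemma weight_ext_avoid C q : v \notin C -> q \in U0 ->
  weight C (ext q) = weight C q + contains_clique q C.
Proof. by move=> vC qU0; rewrite /weight contains_ext // card_ext //; case: ifP; rewrite ?addn1. Qed.

Lemma big_ext_preim_through C F : kclique k S E C -> v \in C -> is_upset U F ->
  \sum_(q in ext_preim F) weight C (ext q) =
  \sum_(q in avoiders F :|: ext_preim F) weight K q + #|ext_preim F|.
Proof.
move=> kC vC [FU uF].
have -> : \sum_(q in avoiders F :|: ext_preim F) weight K q = \sum_(q in ext_preim F) #|q.1|.
  rewrite /weight -big_mkcondr; apply: eq_bigl => q; apply/andP/idP => [[]|qG].
    case/setUP => [/setIdP [qF vq] qK | //].
    have qKU0 : q \in containing U0 K.
      by rewrite inE qK (subktrees_avoid (subsetP FU q qF) vq).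
    by rewrite inE qKU0 (uF q) ?ext_subktree ?subgraph_ext_self.
  by rewrite inE qG orbT; case/setIdP: qG => /setIdP [].
rewrite -sum1_card -big_split; apply: eq_bigr => q /setIdP [qK _].
by rewrite weight_ext_through //= addn1.
Qed.

Lemma bonus_through C F : v \in C -> bonus k S E C F -> clique_graph C \notin F ->
  (#|vcliques F| = 0 /\ bonus k S0 E0 K (avoiders F :|: ext_preim F)) \/
  (#|avoiders F| = 0 /\ #|vcliques F| = 1).
Proof.
move=> vC [CF|[K1 kK1 ->]] CnF; first by rewrite CF in CnF.
rewrite vcliques_containing // avoiders_containing.
case: ifP => vK1; [right; rewrite cards1 | left; rewrite cards0]; split=> //.
  apply/eqP; rewrite cards_eq0 -subset0; apply/subsetP => p /setIdP [pU0 /andP [/subsetP K1p _]].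
  by move: (subktrees0_avoid pU0); rewrite (K1p v vK1).
right; exists K1; first by apply: kclique_avoid; rewrite ?vK1.
apply/setUidPl/subsetP => q /setIdP [/setIdP [qU0 _]] /setIdP [_].
by rewrite contains_ext ?vK1 // => qK1; apply/setIdP.
Qed.

Lemma bonus_avoid C F : v \notin C -> bonus k S E C F ->
  bonus k S0 E0 C (avoiders F) \/ #|vcliques F| = 1.
Proof.
move=> vC [CF|[K1 kK1 ->]]; first by left; left; rewrite inE CF.
case: (boolP (v \in K1)) => vK1; first by right; rewrite vcliques_containing // vK1 cards1.
by left; right; exists K1; rewrite ?avoiders_containing //; apply: kclique_avoid.
Qed.

Lemma weight_bound_through C F : weight_bound k S0 E0 -> kclique k S E C -> v \in C ->
  is_upset U F -> #|F| <= \sum_(p in F) weight C p /\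
  (bonus k S E C F -> #|F| + k.-1 <= \sum_(p in F) weight C p).
Proof.
move=> IH kC vC uF; have [FU _] := uF.
have uH := upsetU (upset_avoiders uF) (upset_ext_preim uF).
have [IH0 IH1] := IH K _ kcliqueK uH.
have A0 : \sum_(p in avoiders F) weight C p = 0.
  apply: big1 => p /setIdP [_ vp]; rewrite /weight; case: ifP => // /andP [/subsetP Cp _].
  by rewrite Cp in vp.
have AH : #|avoiders F| <= #|avoiders F :|: ext_preim F| by apply/subset_leq_card/subsetUl.
have QH : 0 < #|vcliques F| -> bonus k S0 E0 K (avoiders F :|: ext_preim F) /\
    0 < #|avoiders F :|: ext_preim F|.
  move=> Q0; have KG : clique_graph K \in ext_preim F.
    by rewrite ext_preim_full // inE kclique_subktree //= /contains_clique !subxx.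
  by split; [left | apply/card_gt0P; exists (clique_graph K)]; rewrite inE KG orbT.
have Qk := card_vcliques FU.
have CQ := vcliques_clique kC vC (F := F).
have nCQ := card_vcliques_noclique kC vC FU.
rewrite (card_ext_split FU) (big_ext_split _ FU) A0 (big_ext_preim_through kC vC uF).
split.
  case: (posnP #|vcliques F|) => [|/QH [/IH1 ? _]]; first lia.
  by case: (boolP (clique_graph C \in F)) => [/CQ|/nCQ]; lia.
move=> bF; case: (boolP (clique_graph C \in F)) => [/CQ [/QH [/IH1 ? _] ?]|CnF]; first lia.
case: (bonus_through vC bF CnF) => [[? /IH1 ?] | [A1 Q1]]; first lia.
have Q0 : 0 < #|vcliques F| by rewrite Q1.
by have [/IH1 ? ?] := QH Q0; lia.
Qed.

Lemma weight_bound_avoid C F : weight_bound k S0 E0 -> kclique k S E C -> v \notin C ->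
  is_upset U F -> #|F| <= \sum_(p in F) weight C p /\
  (bonus k S E C F -> #|F| + k.-1 <= \sum_(p in F) weight C p).
Proof.
move=> IH kC vC uF; have [FU _] := uF; have kC0 := kclique_avoid kC vC.
have [IHA0 IHA1] := IH C _ kC0 (upset_avoiders uF).
have [IHG0 IHG1] := IH C _ kC0 (upset_ext_preim uF).
have G_ext : \sum_(q in ext_preim F) weight C (ext q) =
    \sum_(q in ext_preim F) weight C q + \sum_(q in ext_preim F) contains_clique q C.
  rewrite -big_split; apply: eq_bigr => q /setIdP [/setIdP [qU0 _] _].
  exact: weight_ext_avoid.
have QG : 0 < #|vcliques F| ->
    #|ext_preim F| + k <= \sum_(q in ext_preim F) weight C q + \sum_(q in ext_preim F) contains_clique q C.
  move=> Q0; have eG := ext_preim_full uF Q0.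
  have T0G : (S0, E0) \in ext_preim F by rewrite eG inE ktree_subktree ?(kclique_contained kcliqueK).
  have := IHG1 (or_intror (ex_intro2 _ _ K kcliqueK eG)).
  have : 0 < \sum_(q in ext_preim F) contains_clique q C.
    by rewrite (bigD1 _ T0G) //= (kclique_contained kC0).
  lia.
have Qk := card_vcliques FU.
rewrite (card_ext_split FU) (big_ext_split _ FU) weight_vcliques_avoid // G_ext.
split; first by case: (posnP #|vcliques F|) => [|/QG]; lia.
by case/(bonus_avoid vC) => [/IHA1|?]; case: (posnP #|vcliques F|) => [|/QG]; lia.
Qed.

Lemma weight_bound_ext : weight_bound k S0 E0 -> weight_bound k S E.
Proof.
move=> IH C F kC uF; case: (boolP (v \in C)) => vC.
  exact: weight_bound_through.
exact: weight_bound_avoid.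
Qed.

End Extension.

Lemma ktree_weight_bound (V : finType) k (S : {set V}) E :
  0 < k -> is_ktree k S E -> weight_bound k S E.
Proof.
move=> k_gt0; elim=> [S0 cS0 | S0 E0 K v H IH KS0 cK clK vS0]; first exact: weight_bound_base.
exact: weight_bound_ext.
Qed.

Unset Implicit Arguments.

Theorem lemma5p1 (V : finType) (k : nat) (VT : {set V}) (ET : {set {set V}})
    (C : {set V}) :
  1 <= k ->
  is_ktree k VT ET ->
  C \subset VT -> #|C| = k -> is_clique ET C ->
  Nbar k VT ET C < Rsum k VT ET C.
Proof.
move=> k_gt0 T CV cC clC; have kC : kclique k VT ET C by [].
have upT : is_upset (subktrees k VT ET) (subktrees k VT ET) by split.
have [bound _] := ktree_weight_bound k_gt0 T kC upT.
have -> : Rsum k VT ET C = \sum_(p in subktrees k VT ET) weight C p.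
  by rewrite /Rsum big_mkcondr.
apply: leq_trans bound; apply/proper_card/properP; split.
  by apply/subsetP => p /setIdP [].
exists (clique_graph C); first exact: kclique_subktree.
by rewrite inE /contains_clique !subxx andbF.
Qed.
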